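(* Let $(A, b, c)$ be a $k$-level LP instance such that, except for the last ($k$-th) player's problem, there are no linear constraints (i.e., $m_l = 0$ for all $l = 1, \ldots, k-1$; all linear constraints appear only in the $k$-th player's problem). Then, for any $\lambda \in \mathbb{R}$ with $\lambda > 0$, the feasible set of the instance $(A, \lambda b, c)$ equals $\lambda$ times the feasible set of the instance $(A, b, c)$.
   Context: A $k$-level LP instance $(A,b,c)$ has data $A_{li} \in \mathbb{Q}^{m_l \times n_i}$, $b_l \in \mathbb{Q}^{m_l}$, $c_{li} \in \mathbb{Q}^{n_i}$. Player $l$ chooses $x_l \in \mathbb{R}^{n_l}$ after players $1,\ldots,l-1$. The $l$-th player's problem, given $x_1,\ldots,x_{l-1}$, is $\inf_{x_l,\ldots,x_k}\{\sum_{i=l}^k c_{li}^\top x_i : \sum_{i=1}^k A_{li}x_i \ge b_l,\ (x_{l+1},\ldots,x_k) \in \mathcal{S}(\text{problem of player } l+1 \text{ given } x_1,\ldots,x_l)\}$, and the $k$-th player's problem is $\inf_{x_k}\{c_{kk}^\top x_k : \sum_{i=1}^k A_{ki}x_i \ge b_k\}$. The instance is identified with the first player's problem; its feasible set is the set of feasible $(x_1,\ldots,x_k)$ of the first player's problem. $\mathcal{S}(\cdot)$ denotes the optimal solution set (optimistic setting). *)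

From HB Require Import structures.
From mathcomp Require Import all_boot all_order all_algebra.
From mathcomp Require Import reals.
Set Implicit Arguments. Unset Strict Implicit. Unset Printing Implicit Defensive.
Import Order.TTheory GRing.Theory Num.Theory.
Local Open Scope ring_scope.

(* Levels/players are indexed by 'I_k (player l+1 in the paper is index l).
   n i : number of variables of player i, m l : number of constraints of
   player l. *)

Section MultiLevelLP.
Variables (R : realType) (k : nat) (m n : 'I_k -> nat).
Variables (A : forall l i : 'I_k, 'M[R]_(m l, n i))
          (b : forall l : 'I_k, 'cV[R]_(m l))
          (c : forall l i : 'I_k, 'cV[R]_(n i)).

Definition profile := forall i : 'I_k, 'cV[R]_(n i).

Definition mlp_constr (l : 'I_k) (x : profile) : Prop :=
  forall r : 'I_(m l), b l r 0 <= (\sum_(i : 'I_k) A l i *m x i) r 0.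

Definition mlp_obj (l : 'I_k) (x : profile) : R :=
  \sum_(i : 'I_k | (l <= i)%N) ((c l i)^T *m x i) 0 0.

(* mlp_feas_from d x : x is feasible for the problem of the player at level
   k - d (0-based), given the decisions x_i, i < k - d, of earlier players.
   The tail from level (k-d)+1 must lie in the optimal solution set
   (optimistic setting) of the next player's problem given the prefix. *)
Fixpoint mlp_feas_from (d : nat) (x : profile) : Prop :=
  match d with
  | 0 => True
  | d'.+1 =>
      (forall l : 'I_k, val l = (k - d'.+1)%N -> mlp_constr l x) /\
      mlp_feas_from d' x /\
      (match d' with
       | 0 => True
       | _.+1 =>
           forall y : profile,
             (forall i : 'I_k, (i < k - d')%N -> y i = x i) ->
             mlp_feas_from d' y ->
             forall l : 'I_k, val l = (k - d')%N -> mlp_obj l x <= mlp_obj l y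
       end)
  end.

Definition mlp_feasible_set : profile -> Prop := mlp_feas_from k.

End MultiLevelLP.

Definition scale_profiles (R : realType) (k : nat) (n : 'I_k -> nat)
  (lam : R) (S : profile R n -> Prop) : profile R n -> Prop :=
  fun x => exists y, S y /\ x = (fun i => lam *: y i).

From HB Require Import structures.
From mathcomp Require Import all_boot all_order all_algebra.
From mathcomp Require Import reals.
From Stdlib Require Import FunctionalExtensionality PropExtensionality.
Set Implicit Arguments. Unset Strict Implicit.
Import Order.TTheory GRing.Theory Num.Theory.
Local Open Scope ring_scope.

(* Every level's data is positively homogeneous in (x, b): scaling the profile
   and all right-hand sides by a > 0 scales every constraint and every
   objective by a, hence preserves feasibility and the optimality comparisons
   of the followers, level by level.  The same argument works whatever the
   numbers m_l are. *)

Section ScaleRhs.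
Variables (R : realType) (k : nat) (m n : 'I_k -> nat).
Variables (A : forall l i : 'I_k, 'M[R]_(m l, n i))
          (b : forall l : 'I_k, 'cV[R]_(m l))
          (c : forall l i : 'I_k, 'cV[R]_(n i)).
Variables (a : R) (a_gt0 : 0 < a).

Definition scale_profile (s : R) (x : profile R n) : profile R n :=
  fun i => s *: x i.

Let a_neq0 : a != 0. Proof. by rewrite gt_eqF. Qed.

Lemma scale_profileK : cancel (scale_profile a^-1) (scale_profile a).
Proof.
move=> x; apply: functional_extensionality_dep => i.
by rewrite /scale_profile scalerA divff // scale1r.
Qed.

Lemma forall_scale_profile (P : profile R n -> Prop) :
  (forall z, P z) <-> (forall z, P (scale_profile a z)).
Proof. by split=> hP z //; rewrite -[z]scale_profileK. Qed.

Lemma scale_profile_inj (y z : profile R n) (i : 'I_k) :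
  scale_profile a z i = scale_profile a y i <-> z i = y i.
Proof. by rewrite /scale_profile; split=> [/(scalerI a_neq0)|->]. Qed.

Lemma mlp_constr_scale (l : 'I_k) (y : profile R n) :
  mlp_constr A (fun l => a *: b l) l (scale_profile a y) <-> mlp_constr A b l y.
Proof.
have lhsE : \sum_i A l i *m scale_profile a y i = a *: \sum_i A l i *m y i.
  by rewrite scaler_sumr; apply: eq_bigr => i _; rewrite scalemxAr.
by rewrite /mlp_constr lhsE; split=> h r; have := h r; rewrite !mxE ler_pM2l.
Qed.

Lemma mlp_obj_scale (l : 'I_k) (y : profile R n) :
  mlp_obj c l (scale_profile a y) = a * mlp_obj c l y.
Proof.
rewrite /mlp_obj mulr_sumr; apply: eq_bigr => i _.
by rewrite -scalemxAr mxE.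
Qed.

Lemma optimal_tail_scale (P' P : profile R n -> Prop) (j j' : nat)
    (y : profile R n) :
  (forall z, P' (scale_profile a z) <-> P z) ->
  (forall z, (forall i : 'I_k, (i < j)%N -> z i = scale_profile a y i) ->
     P' z -> forall l : 'I_k, val l = j' ->
     mlp_obj c l (scale_profile a y) <= mlp_obj c l z) <->
  (forall z, (forall i : 'I_k, (i < j)%N -> z i = y i) ->
     P z -> forall l : 'I_k, val l = j' -> mlp_obj c l y <= mlp_obj c l z).
Proof.
move=> hP; rewrite forall_scale_profile.
split=> hopt z hzy /hP hz l hl.
- by rewrite -(ler_pM2l a_gt0) -!mlp_obj_scale hopt // => i /hzy /scale_profile_inj.
- by rewrite !mlp_obj_scale ler_pM2l // hopt // => i /hzy /scale_profile_inj.
Qed.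

Lemma mlp_feas_from_scale (d : nat) (y : profile R n) :
  mlp_feas_from A (fun l => a *: b l) c d (scale_profile a y) <->
  mlp_feas_from A b c d y.
Proof.
elim: d y => [|d IH] y //=.
have constrE :
    (forall l : 'I_k, val l = (k - d.+1)%N ->
       mlp_constr A (fun l => a *: b l) l (scale_profile a y)) <->
    (forall l : 'I_k, val l = (k - d.+1)%N -> mlp_constr A b l y).
  by split=> h l /h; rewrite mlp_constr_scale.
case: d IH constrE => [|d] IH constrE; first by have := IH y; tauto.
by have := IH y; have := optimal_tail_scale (k - d.+1) (k - d.+1) y IH; tauto.
Qed.

End ScaleRhs.

Theorem lemma3p2 (R : realType) (k : nat) (m n : 'I_k -> nat)
  (A : forall l i : 'I_k, 'M[R]_(m l, n i))
  (b : forall l : 'I_k, 'cV[R]_(m l))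
  (c : forall l i : 'I_k, 'cV[R]_(n i))
  (hm : forall l : 'I_k, (val l < k.-1)%N -> m l = 0%N)
  (lam : R) (hlam : 0 < lam) :
  mlp_feasible_set A (fun l => lam *: b l) c =
  scale_profiles lam (mlp_feasible_set A b c).
Proof.
apply: functional_extensionality => x; apply: propositional_extensionality.
rewrite /mlp_feasible_set /scale_profiles; split.
- move=> feas_x; exists (scale_profile lam^-1 x).
  split; last by rewrite -{1}[x](scale_profileK hlam).
  by apply/(mlp_feas_from_scale A b c hlam); rewrite scale_profileK.
- by move=> [y [feas_y ->]]; apply/(mlp_feas_from_scale A b c hlam).
Qed.
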